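(* Let $\alpha,\beta,p\in\mathbb{C}$, $s^2=\alpha^2-p^2$, $t^2=\beta^2-p^2$, and let $\rho\neq 0$ be a constant. Suppose $\varphi_1,\varphi_2:\mathbb{Z}^2\to\mathbb{C}\setminus\{0\}$ satisfy, for all $n,m\in\mathbb{Z}$, the discrete Abel relations $$\varphi_1\widetilde{\varphi}_2-\varphi_2\widetilde{\varphi}_1=\varphi_1\widehat{\varphi}_2-\varphi_2\widehat{\varphi}_1=\rho\,s^{2n}t^{2m}.$$ Then each of $\varphi=\varphi_1$ and $\varphi=\varphi_2$ satisfies the lattice eigenfunction KdV (leKdV) equation $$(\alpha^2-p^2)\,\varphi\widehat{\varphi}-(\beta^2-p^2)\,\varphi\widetilde{\varphi}-\widetilde{\varphi}\,\widehat{\widetilde{\varphi}}+\widehat{\varphi}\,\widehat{\widetilde{\varphi}}=0 .$$ In other words, these relations define an auto-Bäcklund transformation between $\varphi_1$ and $\varphi_2$ as solutions of the leKdV equation. (In particular this applies to two linearly independent solutions of the Lax pair $\widetilde{\widetilde{\varphi}}+h\widetilde{\varphi}+\alpha^2\varphi=p^2\varphi$, $\widehat{\varphi}=\widetilde{\varphi}-g\varphi$ with $\widehat h-\widetilde h=\widetilde{\widetilde g}-g$, $(h+\widetilde g)g=\beta^2-\alpha^2$, which satisfy these relations.)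
   Context: Shift notation: for a function $f$ on $\mathbb{Z}^2$ (variables $n,m$), $\widetilde f(n,m)=f(n+1,m)$, $\widehat f(n,m)=f(n,m+1)$, and $\widehat{\widetilde f}(n,m)=f(n+1,m+1)$. *)

From HB Require Import structures.
From mathcomp Require Import all_boot all_order all_algebra.
From mathcomp Require Import complex.
From mathcomp Require Import Rstruct.
Set Implicit Arguments. Unset Strict Implicit. Unset Printing Implicit Defensive.
Import Order.TTheory GRing.Theory Num.Theory.

Definition CC : Type := complex Rdefinitions.R.

(* Shift notation on Z^2: tilde = shift in n, hat = shift in m. *)
Definition shn {T} (f : int -> int -> T) : int -> int -> T := fun n m => f (n + 1)%R m.
Definition shm {T} (f : int -> int -> T) : int -> int -> T := fun n m => f n (m + 1)%R.

From HB Require Import structures.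
From mathcomp Require Import all_boot all_order all_algebra.
From mathcomp Require Import complex.
From mathcomp Require Import Rstruct.
From mathcomp Require Import ring.
Import Order.TTheory GRing.Theory Num.Theory.
Local Open Scope ring_scope.

(* On an elementary square with corners phi, phi~, phi^, phi~^, the Abel
   relations prescribe the Casoratians of (phi1, phi2) along the four edges:
   W, W, s^2 W and t^2 W, with W = rho s^(2n) t^(2m) <> 0.  The Casoratian X
   across the diagonal from phi~ to phi^ can then be computed from either end:
   phi X = W (phi~ - phi^) and phi~^ X = W (s^2 phi^ - t^2 phi~).  Eliminating
   X and dividing by W gives leKdV for phi1; swapping phi1 and phi2 only flips
   the sign of W, so phi2 satisfies it as well. *)

Lemma leKdV_of_abel_square (F : fieldType) (s2 t2 W a b a1 b1 a2 b2 a12 b12 : F) :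
  W != 0 ->
  a * b1 - b * a1 = W -> a * b2 - b * a2 = W ->
  a1 * b12 - b1 * a12 = s2 * W -> a2 * b12 - b2 * a12 = t2 * W ->
  s2 * a * a2 - t2 * a * a1 - a1 * a12 + a2 * a12 = 0.
Proof.
move=> W0 e1 e2 e12 e21.
set X := a1 * b2 - a2 * b1.
have X_at_corner : a * X = W * (a1 - a2).
  apply/eqP; rewrite -subr_eq0; apply/eqP.
  have -> : a * X - W * (a1 - a2)
      = a1 * ((a * b2 - b * a2) - W) - a2 * ((a * b1 - b * a1) - W)
    by rewrite /X; ring.
  by rewrite e1 e2 !subrr !mulr0 subrr.
have X_at_opposite_corner : a12 * X = W * (s2 * a2 - t2 * a1).
  apply/eqP; rewrite -subr_eq0; apply/eqP.
  have -> : a12 * X - W * (s2 * a2 - t2 * a1)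
      = a2 * ((a1 * b12 - b1 * a12) - s2 * W) - a1 * ((a2 * b12 - b2 * a12) - t2 * W)
    by rewrite /X; ring.
  by rewrite e12 e21 !subrr !mulr0 subrr.
apply/eqP; rewrite -(mulrI_eq0 _ (mulfI W0)); apply/eqP.
have -> : W * (s2 * a * a2 - t2 * a * a1 - a1 * a12 + a2 * a12)
    = a * (W * (s2 * a2 - t2 * a1)) - a12 * (W * (a1 - a2)) by ring.
by rewrite -X_at_corner -X_at_opposite_corner; ring.
Qed.

Definition leKdV {F : nzRingType} (s2 t2 : F) (phi : int -> int -> F) (n m : int) : F :=
  s2 * phi n m * shm phi n m - t2 * phi n m * shn phi n m
  - shn phi n m * shn (shm phi) n m + shm phi n m * shn (shm phi) n m.

Section AbelRelations.

Context {F : fieldType} {s2 t2 : F} {W phi1 phi2 : int -> int -> F}.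
Hypothesis W_neq0 : forall n m, W n m != 0.
Hypothesis shn_W : forall n m, shn W n m = s2 * W n m.
Hypothesis shm_W : forall n m, shm W n m = t2 * W n m.
Hypothesis abel_n : forall n m,
  phi1 n m * shn phi2 n m - phi2 n m * shn phi1 n m = W n m.
Hypothesis abel_m : forall n m,
  phi1 n m * shm phi2 n m - phi2 n m * shm phi1 n m = W n m.

Lemma abel_leKdV_l n m : leKdV s2 t2 phi1 n m = 0.
Proof.
have e12 := abel_m (n + 1) m; have e21 := abel_n n (m + 1).
rewrite [W _ _]shn_W in e12; rewrite [W _ _]shm_W in e21.
exact: leKdV_of_abel_square (W_neq0 n m) (abel_n n m) (abel_m n m) e12 e21.
Qed.

End AbelRelations.

Lemma abel_leKdV_r {F : fieldType} {s2 t2 : F} {W phi1 phi2 : int -> int -> F} :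
  (forall n m, W n m != 0) ->
  (forall n m, shn W n m = s2 * W n m) -> (forall n m, shm W n m = t2 * W n m) ->
  (forall n m, phi1 n m * shn phi2 n m - phi2 n m * shn phi1 n m = W n m) ->
  (forall n m, phi1 n m * shm phi2 n m - phi2 n m * shm phi1 n m = W n m) ->
  forall n m, leKdV s2 t2 phi2 n m = 0.
Proof.
move=> W0 Wn Wm abel_n abel_m.
apply: (@abel_leKdV_l _ _ _ (fun n m => - W n m) _ phi1).
- by move=> n m; rewrite oppr_eq0.
- by move=> n m; rewrite mulrN -Wn.
- by move=> n m; rewrite mulrN -Wm.
- by move=> n m; rewrite -abel_n opprB.
- by move=> n m; rewrite -abel_m opprB.
Qed.

Lemma expfz_double_succ (F : fieldType) (x : F) (n : int) :
  x != 0 -> x ^ (2 * (n + 1)) = x ^+ 2 * x ^ (2 * n).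
Proof. by move=> x0; rewrite mulrDr mulr1 expfzDr // mulrC. Qed.

Theorem proposition3p1
  (alpha beta p s t rho : CC)
  (hs : s ^+ 2 = alpha ^+ 2 - p ^+ 2) (ht : t ^+ 2 = beta ^+ 2 - p ^+ 2)
  (hs0 : s != 0) (ht0 : t != 0) (hrho : rho != 0)
  (phi1 phi2 : int -> int -> CC)
  (h1 : forall n m, phi1 n m != 0) (h2 : forall n m, phi2 n m != 0)
  (hab1 : forall n m : int,
     phi1 n m * shn phi2 n m - phi2 n m * shn phi1 n m
       = rho * s ^ (2 * n) * t ^ (2 * m))
  (hab2 : forall n m : int,
     phi1 n m * shm phi2 n m - phi2 n m * shm phi1 n m
       = rho * s ^ (2 * n) * t ^ (2 * m)) :
  forall phi, (phi = phi1 \/ phi = phi2) ->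
  forall n m : int,
    (alpha ^+ 2 - p ^+ 2) * phi n m * shm phi n m
    - (beta ^+ 2 - p ^+ 2) * phi n m * shn phi n m
    - shn phi n m * shn (shm phi) n m
    + shm phi n m * shn (shm phi) n m = 0.
Proof.
pose W : int -> int -> CC := fun n m => rho * s ^ (2 * n) * t ^ (2 * m).
have W0 n m : W n m != 0 by rewrite !mulf_neq0 // expfz_neq0.
have Wn n m : shn W n m = s ^+ 2 * W n m.
  by rewrite /shn /W expfz_double_succ //; ring.
have Wm n m : shm W n m = t ^+ 2 * W n m.
  by rewrite /shm /W expfz_double_succ //; ring.
move=> phi [] -> n m; rewrite -hs -ht.
- exact: (abel_leKdV_l W0 Wn Wm hab1 hab2 n m).
- exact: (abel_leKdV_r W0 Wn Wm hab1 hab2 n m).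
Qed.
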